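(* Assume $\delta>d$. Then the limit $$G_f^\alpha(z,w)=\lim_{n\to\infty}\frac{1}{\delta^n}\log^+\max\{|p^n(z)|^\alpha,\,|Q_z^n(w)|\}$$ exists for every $(z,w)\in\mathbb{C}^2$ and equals $\alpha G_p(z)$.
   Context: Let $p(z)=z^\delta+O(z^{\delta-1})$ be a monic polynomial of degree $\delta\ge 2$, and let $q(z,w)=b(z)w^d+(\text{terms of lower degree in } w)$ be a polynomial with $d=\deg_w q\ge 2$, where $b$ is a monic polynomial of degree $\gamma\ge 0$. Let $f(z,w)=(p(z),q(z,w))$. Write $q_z(w)=q(z,w)$ and $Q_z^n=q_{p^{n-1}(z)}\circ\cdots\circ q_{p(z)}\circ q_z$, so that $f^n(z,w)=(p^n(z),Q_z^n(w))$. Let $G_p(z)=\lim_{n\to\infty}\delta^{-n}\log^+|p^n(z)|$ (the Green function of $p$). For $\delta>d$, define $$\alpha=\max\Big\{\frac{n_j}{\delta-m_j}\;:\; z^{n_j}w^{m_j}\text{ is a monomial appearing in } q \text{ with nonzero coefficient}\Big\}\ \ (\ge 0).$$ *)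

From Stdlib Require Import Reals List.
Import ListNotations.
Open Scope R_scope.

(** Complex numbers as pairs (re, im). *)
Definition Cx : Type := (R * R)%type.
Definition C0 : Cx := (0, 0).
Definition C1 : Cx := (1, 0).
Definition Cadd (a b : Cx) : Cx := (fst a + fst b, snd a + snd b).
Definition Cmul (a b : Cx) : Cx :=
  (fst a * fst b - snd a * snd b, fst a * snd b + snd a * fst b).
Definition Cmod (a : Cx) : R := sqrt (fst a ^ 2 + snd a ^ 2).
Definition Cnz (c : Cx) : bool :=
  if Req_EM_T (fst c) 0 then (if Req_EM_T (snd c) 0 then false else true) else true.

(** One-variable polynomials: coefficient lists, lowest degree first. *)
Definition poly1 := list Cx.
Definition peval (l : poly1) (z : Cx) : Cx :=
  fold_right (fun a acc => Cadd a (Cmul z acc)) C0 l.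
Definition monic_deg (l : poly1) (k : nat) : Prop :=
  length l = S k /\ nth k l C0 = C1.

(** Two-variable polynomials q(z,w) = sum_m a_m(z) w^m, given as the list
    [a_0; a_1; ...] of one-variable polynomials in z. *)
Definition poly2 := list poly1.
Definition qeval (q : poly2) (z w : Cx) : Cx :=
  fold_right (fun a acc => Cadd (peval a z) (Cmul w acc)) C0 q.
(** coefficient of z^n w^m in q *)
Definition qcoef (q : poly2) (n m : nat) : Cx := nth n (nth m q []) C0.

Definition fmap (p : poly1) (q : poly2) (zw : Cx * Cx) : Cx * Cx :=
  (peval p (fst zw), qeval q (fst zw) (snd zw)).
Definition fiter (p : poly1) (q : poly2) (n : nat) (zw : Cx * Cx) : Cx * Cx :=
  Nat.iter n (fmap p q) zw.
Definition piter (p : poly1) (n : nat) (z : Cx) : Cx := Nat.iter n (peval p) z.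

(** alpha = max { n_j / (delta - m_j) : z^{n_j} w^{m_j} has nonzero coefficient }
    (monomials with zero coefficient contribute 0, which is harmless as alpha >= 0). *)
Definition alpha (delta : nat) (q : poly2) : R :=
  fold_right Rmax 0
    (flat_map (fun m =>
       map (fun n => if Cnz (qcoef q n m) then INR n / (INR delta - INR m) else 0)
           (seq 0 (length (nth m q []))))
       (seq 0 (length q))).

Definition logp (x : R) : R := if Rlt_dec 0 x then Rmax 0 (ln x) else 0.
(** x^a for x >= 0, a >= 0, with 0^0 = 1 and 0^a = 0 for a > 0. *)
Definition rpow (x a : R) : R :=
  if Rlt_dec 0 x then Rpower x a else (if Req_EM_T a 0 then 1 else 0).

(* Write L_n = log^+|p^n(z)| and U_n = log^+|Q_z^n(w)|.  Bounding each monomial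
   z^n w^m of q by the defining inequality n <= alpha (delta - m) of alpha gives
   the one-step estimates
       L_{n+1} <= c1 + delta L_n,
       U_{n+1} <= c2 + alpha delta L_n + d max(0, U_n - alpha L_n).
   The first makes L_n / delta^n converge (to G_p(z)).  The second says that the
   normalized excess e_n = max(0, U_n - alpha L_n) / delta^n satisfies
   e_{n+1} <= (d/delta) e_n + o(1), so e_n -> 0 because d < delta.  Finally
   log^+ max(|p^n z|^alpha, |Q^n w|) = alpha L_n + max(0, U_n - alpha L_n). *)
From Stdlib Require Import Reals List Lra Lia Psatz.
From Coquelicot Require Import Rcomplements Rbar Lim_seq.
From Coquelicot Require Complex.
Import ListNotations.
Open Scope R_scope.

Lemma Cmod_Cadd (a b : Cx) : Cmod (Cadd a b) <= Cmod a + Cmod b.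
Proof. exact (Complex.Cmod_triangle a b). Qed.

Lemma Cmod_Cmul (a b : Cx) : Cmod (Cmul a b) = Cmod a * Cmod b.
Proof. exact (Complex.Cmod_mult a b). Qed.

Lemma Cmod_nonneg (a : Cx) : 0 <= Cmod a.
Proof. exact (Complex.Cmod_ge_0 a). Qed.

Lemma Cmod_C0 : Cmod C0 = 0.
Proof. exact Complex.Cmod_0. Qed.

Lemma Cmod_of_zero_coef (a : Cx) : Cnz a = false -> Cmod a = 0.
Proof.
  destruct a as [x y]; unfold Cnz; simpl.
  destruct (Req_EM_T x 0), (Req_EM_T y 0); try discriminate.
  intros _; subst x y; exact Cmod_C0.
Qed.

Lemma exp_monotone (x y : R) : x <= y -> exp x <= exp y.
Proof. intros [Hlt | ->]; [left; apply exp_increasing; exact Hlt | lra]. Qed.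

Lemma exp_pow (x : R) (n : nat) : exp x ^ n = exp (INR n * x).
Proof. rewrite <- Rpower_pow by apply exp_pos; unfold Rpower; rewrite ln_exp; reflexivity. Qed.

Lemma Rmax0_div (x P : R) : 0 < P -> Rmax 0 x / P = Rmax 0 (x / P).
Proof.
  intros HP; pose proof (Rinv_0_lt_compat P HP); unfold Rmax, Rdiv.
  destruct (Rle_dec 0 x), (Rle_dec 0 (x * / P)); try ring; exfalso; nra.
Qed.

Lemma logp_nonneg (x : R) : 0 <= logp x.
Proof. unfold logp; destruct (Rlt_dec 0 x); [apply Rmax_l | lra]. Qed.

Lemma logp_eq_ln_max (x : R) : 0 <= x -> logp x = ln (Rmax 1 x).
Proof.
  intros Hx; unfold logp.
  destruct (Rlt_dec 0 x) as [Hpos | Hnpos].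
  - destruct (Rle_dec 1 x) as [H1 | H1].
    + rewrite (Rmax_right 1 x H1), Rmax_right; [reflexivity |].
      rewrite <- ln_1; apply ln_le; lra.
    + rewrite (Rmax_left 1 x) by lra; rewrite ln_1, Rmax_left; [reflexivity |].
      rewrite <- ln_1; left; apply ln_increasing; lra.
  - rewrite Rmax_left by lra; symmetry; apply ln_1.
Qed.

(* e^{log^+ x} = max(1, x) is the natural radius for monomial bounds at x. *)
Lemma exp_logp (x : R) : 0 <= x -> exp (logp x) = Rmax 1 x.
Proof.
  intros Hx; rewrite logp_eq_ln_max by exact Hx.
  apply exp_ln, Rlt_le_trans with 1; [lra | apply Rmax_l].
Qed.

Lemma logp_monotone (x y : R) : 0 <= x -> x <= y -> logp x <= logp y.
Proof.
  intros Hx Hxy; rewrite !logp_eq_ln_max by lra.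
  apply ln_le; [apply Rlt_le_trans with 1; [lra | apply Rmax_l] |].
  apply Rle_max_compat_l, Hxy.
Qed.

Lemma logp_Rmax (x y : R) :
  0 <= x -> 0 <= y -> logp (Rmax x y) = Rmax (logp x) (logp y).
Proof.
  intros Hx Hy; destruct (Rle_dec x y).
  - rewrite !Rmax_right; auto using logp_monotone.
  - rewrite !Rmax_left; auto using logp_monotone with real.
Qed.

Lemma rpow_nonneg (x a : R) : 0 <= rpow x a.
Proof.
  unfold rpow; destruct (Rlt_dec 0 x).
  - left; apply exp_pos.
  - destruct (Req_EM_T a 0); lra.
Qed.

Lemma logp_rpow (x a : R) : 0 <= x -> 0 <= a -> logp (rpow x a) = a * logp x.
Proof.
  intros Hx Ha; unfold rpow, logp.
  destruct (Rlt_dec 0 x) as [Hpos | Hnpos].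
  - destruct (Rlt_dec 0 (Rpower x a)) as [_ | Hneg].
    + unfold Rpower at 1; rewrite ln_exp, <- RmaxRmult, Rmult_0_r by exact Ha.
      reflexivity.
    + exfalso; apply Hneg, exp_pos.
  - rewrite Rmult_0_r; destruct (Req_EM_T a 0).
    + destruct (Rlt_dec 0 1); [rewrite ln_1; apply Rmax_left |]; lra.
    + destruct (Rlt_dec 0 0); lra.
Qed.

Lemma logp_le_of_bound (x K E : R) :
  0 <= x -> 0 <= K -> 0 <= E -> x <= K * exp E -> logp x <= ln (K + 1) + E.
Proof.
  intros Hx HK HE Hb.
  assert (HeE : 1 <= exp E) by (rewrite <- exp_0; apply exp_monotone, HE).
  rewrite logp_eq_ln_max, <- (ln_exp E), <- ln_mult by (lra || apply exp_pos).
  apply ln_le; [apply Rlt_le_trans with 1; [lra | apply Rmax_l] |].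
  apply Rmax_lub; nra.
Qed.

Definition norm1 (l : poly1) : R := fold_right (fun a s => Cmod a + s) 0 l.
Definition norm2 (q : poly2) : R := fold_right (fun a s => norm1 a + s) 0 q.

Lemma norm1_nonneg (l : poly1) : 0 <= norm1 l.
Proof. induction l as [|a l IH]; simpl; [lra | pose proof (Cmod_nonneg a); lra]. Qed.

Lemma norm2_nonneg (q : poly2) : 0 <= norm2 q.
Proof. induction q as [|a q IH]; simpl; [lra | pose proof (norm1_nonneg a); lra]. Qed.

(* The weight X absorbs the
   factor z of the Horner scheme in the induction. *)
Lemma peval_weighted_bound (Z B : R) (z : Cx) :
  Cmod z <= Z -> 1 <= Z ->
  forall (l : poly1) (X : R), 0 <= X ->
  (forall n, (n < length l)%nat -> Cnz (nth n l C0) = true -> X * Z ^ n <= B) ->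
  X * Cmod (peval l z) <= norm1 l * B.
Proof.
  intros Hz HZ l; induction l as [|a l IH]; intros X HX Hmon.
  - change (X * Cmod C0 <= 0 * B); rewrite Cmod_C0; lra.
  - change (X * Cmod (Cadd a (Cmul z (peval l z))) <= (Cmod a + norm1 l) * B).
    pose proof (Cmod_nonneg a) as Ha0; pose proof (Cmod_nonneg z) as Hz0.
    assert (Hhead : X * Cmod a <= Cmod a * B).
    { destruct (Cnz a) eqn:Ea.
      - specialize (Hmon 0%nat ltac:(simpl; lia) Ea); simpl in Hmon; nra.
      - rewrite (Cmod_of_zero_coef _ Ea); lra. }
    assert (Htail : (X * Cmod z) * Cmod (peval l z) <= norm1 l * B).
    { apply IH; [nra |]; intros n Hn Hc.
      specialize (Hmon (S n) ltac:(simpl; lia) Hc); simpl in Hmon.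
      pose proof (pow_le Z n ltac:(lra)).
      assert (X * Cmod z * Z ^ n <= X * (Z * Z ^ n)) by
        (rewrite Rmult_assoc; apply Rmult_le_compat_l; nra).
      lra. }
    pose proof (Cmod_Cadd a (Cmul z (peval l z))) as Htri; rewrite Cmod_Cmul in Htri.
    assert (X * Cmod (Cadd a (Cmul z (peval l z)))
            <= X * (Cmod a + Cmod z * Cmod (peval l z)))
      by (apply Rmult_le_compat_l; lra).
    nra.
Qed.

Lemma qeval_weighted_bound (Z W B : R) (z w : Cx) :
  Cmod z <= Z -> 1 <= Z -> Cmod w <= W -> 1 <= W ->
  forall (q : poly2) (X : R), 0 <= X ->
  (forall m n, (m < length q)%nat -> (n < length (nth m q []))%nat ->
     Cnz (qcoef q n m) = true -> X * Z ^ n * W ^ m <= B) ->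
  X * Cmod (qeval q z w) <= norm2 q * B.
Proof.
  intros Hz HZ Hw HW q; induction q as [|a q IH]; intros X HX Hmon.
  - change (X * Cmod C0 <= 0 * B); rewrite Cmod_C0; lra.
  - change (X * Cmod (Cadd (peval a z) (Cmul w (qeval q z w))) <= (norm1 a + norm2 q) * B).
    pose proof (Cmod_nonneg w) as Hw0.
    assert (Hhead : X * Cmod (peval a z) <= norm1 a * B).
    { apply (peval_weighted_bound Z B z Hz HZ a X HX); intros n Hn Hc.
      specialize (Hmon 0%nat n ltac:(simpl; lia) Hn Hc); simpl in Hmon; lra. }
    assert (Htail : (X * Cmod w) * Cmod (qeval q z w) <= norm2 q * B).
    { apply IH; [nra |]; intros m n Hm Hn Hc.
      specialize (Hmon (S m) n ltac:(simpl; lia) Hn Hc); simpl in Hmon.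
      pose proof (pow_le Z n ltac:(lra)); pose proof (pow_le W m ltac:(lra)).
      assert (0 <= X * Z ^ n * W ^ m) by (apply Rmult_le_pos; [apply Rmult_le_pos|]; lra).
      nra. }
    pose proof (Cmod_Cadd (peval a z) (Cmul w (qeval q z w))) as Htri.
    rewrite Cmod_Cmul in Htri.
    assert (X * Cmod (Cadd (peval a z) (Cmul w (qeval q z w)))
            <= X * (Cmod (peval a z) + Cmod w * Cmod (qeval q z w)))
      by (apply Rmult_le_compat_l; lra).
    nra.
Qed.

Lemma fold_Rmax_nonneg (l : list R) : 0 <= fold_right Rmax 0 l.
Proof.
  induction l as [|x l IH]; simpl; [lra |].
  eapply Rle_trans; [exact IH | apply Rmax_r].
Qed.

Lemma fold_Rmax_ge (l : list R) (x : R) : In x l -> x <= fold_right Rmax 0 l.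
Proof.
  induction l as [|y l IH]; simpl; [tauto |]; intros [<- | Hin]; [apply Rmax_l |].
  eapply Rle_trans; [exact (IH Hin) | apply Rmax_r].
Qed.

Lemma alpha_nonneg (delta : nat) (q : poly2) : 0 <= alpha delta q.
Proof. apply fold_Rmax_nonneg. Qed.

Lemma monomial_le_alpha (delta : nat) (q : poly2) (m n : nat) :
  (m < delta)%nat -> (m < length q)%nat -> (n < length (nth m q []))%nat ->
  Cnz (qcoef q n m) = true -> INR n <= alpha delta q * (INR delta - INR m).
Proof.
  intros Hmd Hm Hn Hc.
  assert (Hgap : 0 < INR delta - INR m) by (pose proof (lt_INR _ _ Hmd); lra).
  assert (Hle : INR n / (INR delta - INR m) <= alpha delta q).
  { apply fold_Rmax_ge, in_flat_map; exists m; split; [apply in_seq; lia |].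
    apply in_map_iff; exists n; rewrite Hc; split; [reflexivity | apply in_seq; lia]. }
  apply (Rmult_le_compat_r (INR delta - INR m)) in Hle; [| lra].
  unfold Rdiv in Hle; rewrite Rmult_assoc, Rinv_l, Rmult_1_r in Hle; lra.
Qed.

Lemma monomial_exponent_bound (a delta d m n Lz Lw : R) :
  0 <= Lz -> 0 <= m <= d -> n <= a * (delta - m) ->
  n * Lz + m * Lw <= a * delta * Lz + d * Rmax 0 (Lw - a * Lz).
Proof.
  intros HLz Hm Hn.
  pose proof (Rmax_l 0 (Lw - a * Lz)); pose proof (Rmax_r 0 (Lw - a * Lz)).
  assert (n * Lz <= a * (delta - m) * Lz) by (apply Rmult_le_compat_r; lra).
  assert (m * (Lw - a * Lz) <= m * Rmax 0 (Lw - a * Lz)) by (apply Rmult_le_compat_l; lra).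
  assert (m * Rmax 0 (Lw - a * Lz) <= d * Rmax 0 (Lw - a * Lz)) by (apply Rmult_le_compat_r; lra).
  nra.
Qed.

Lemma p_growth (delta : nat) (p : poly1) (z : Cx) :
  length p = S delta ->
  logp (Cmod (peval p z)) <= ln (norm1 p + 1) + INR delta * logp (Cmod z).
Proof.
  intros Hlen; set (Lz := logp (Cmod z)).
  assert (HZ : exp Lz = Rmax 1 (Cmod z)) by apply exp_logp, Cmod_nonneg.
  apply logp_le_of_bound; try apply Cmod_nonneg; try apply norm1_nonneg.
  - apply Rmult_le_pos; [apply pos_INR | apply logp_nonneg].
  - rewrite <- (Rmult_1_l (Cmod _)).
    apply (peval_weighted_bound (exp Lz)); rewrite ?HZ; try apply Rmax_l; try apply Rmax_r; try lra.
    intros n Hn _; rewrite Rmult_1_l, <- HZ, exp_pow; apply exp_monotone.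
    apply Rmult_le_compat_r; [apply logp_nonneg | apply le_INR; lia].
Qed.

Lemma q_growth (delta d : nat) (q : poly2) (z w : Cx) :
  length q = S d -> (d < delta)%nat ->
  logp (Cmod (qeval q z w)) <=
    ln (norm2 q + 1) + alpha delta q * INR delta * logp (Cmod z)
      + INR d * Rmax 0 (logp (Cmod w) - alpha delta q * logp (Cmod z)).
Proof.
  intros Hlen Hdd; set (a := alpha delta q).
  set (Lz := logp (Cmod z)); set (Lw := logp (Cmod w)).
  assert (HZ : exp Lz = Rmax 1 (Cmod z)) by apply exp_logp, Cmod_nonneg.
  assert (HW : exp Lw = Rmax 1 (Cmod w)) by apply exp_logp, Cmod_nonneg.
  assert (Ha : 0 <= a) by apply alpha_nonneg.
  assert (HLz : 0 <= Lz) by apply logp_nonneg.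
  rewrite Rplus_assoc; apply logp_le_of_bound; try apply Cmod_nonneg; try apply norm2_nonneg.
  - pose proof (pos_INR delta); pose proof (pos_INR d); pose proof (Rmax_l 0 (Lw - a * Lz)).
    apply Rplus_le_le_0_compat; repeat apply Rmult_le_pos; lra.
  - rewrite <- (Rmult_1_l (Cmod _)).
    apply (qeval_weighted_bound (exp Lz) (exp Lw)); rewrite ?HZ, ?HW;
      try apply Rmax_l; try apply Rmax_r; try lra.
    intros m n Hm Hn Hc; rewrite Rmult_1_l, <- HZ, <- HW, !exp_pow, <- exp_plus.
    apply exp_monotone, monomial_exponent_bound; [exact HLz | split | ].
    + apply pos_INR.
    + apply le_INR; lia.
    + apply monomial_le_alpha; auto; lia.
Qed.

Lemma inv_pow_to_zero (D : R) : 1 < D -> is_lim_seq (fun n => (/ D) ^ n) 0.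
Proof.
  intros HD; apply is_lim_seq_geom.
  rewrite Rabs_pos_eq by (left; apply Rinv_0_lt_compat; lra).
  rewrite <- Rinv_1; apply Rinv_lt_contravar; lra.
Qed.

(* Existence of the Green function: if 0 <= L_{n+1} <= c + D L_n with D > 1,
   then L_n / D^n converges, since L_n / D^n + c/(D-1) D^{-n} decreases. *)
Lemma green_limit_exists (L : nat -> R) (D c : R) :
  1 < D -> 0 <= c -> (forall n, 0 <= L n) -> (forall n, L (S n) <= c + D * L n) ->
  exists G : R, is_lim_seq (fun n => L n / D ^ n) G.
Proof.
  intros HD Hc HL Hrec.
  set (corr := fun n => c / (D - 1) * (/ D) ^ n).
  assert (Hcorr0 : forall n, 0 <= corr n).
  { intro n; apply Rmult_le_pos; [apply Rdiv_le_0_compat; lra |].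
    apply pow_le; left; apply Rinv_0_lt_compat; lra. }
  assert (Hcorr : is_lim_seq corr 0).
  { replace (Finite 0) with (Finite (c / (D - 1) * 0)) by (f_equal; ring).
    apply is_lim_seq_mult'; [apply is_lim_seq_const | apply inv_pow_to_zero, HD]. }
  set (b := fun n => L n / D ^ n + corr n).
  assert (Hdecr : forall n, b (S n) <= b n).
  { intro n; unfold b, corr; simpl pow.
    assert (HP : 0 < D ^ n) by (apply pow_lt; lra).
    assert (L (S n) / (D * D ^ n) <= (c + D * L n) / (D * D ^ n))
      by (apply Rmult_le_compat_r; [left; apply Rinv_0_lt_compat; nra | apply Hrec]).
    assert ((c + D * L n) / (D * D ^ n) + c / (D - 1) * (/ D * (/ D) ^ n)
            = L n / D ^ n + c / (D - 1) * (/ D) ^ n)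
      by (rewrite pow_inv; field; lra).
    lra. }
  assert (Hpos : forall n, 0 <= b n).
  { intro n; unfold b; pose proof (Hcorr0 n).
    assert (0 <= L n / D ^ n) by (apply Rdiv_le_0_compat; [apply HL | apply pow_lt; lra]).
    lra. }
  destruct (ex_finite_lim_seq_decr b 0 Hdecr Hpos) as [G HG].
  exists (G - 0); apply (is_lim_seq_ext (fun n => b n - corr n)).
  { intro n; unfold b; ring. }
  apply is_lim_seq_minus'; assumption.
Qed.

Lemma perturbed_contraction (e t : nat -> R) (r : R) :
  (forall n, 0 <= e n) -> 0 <= r < 1 ->
  (forall n, e (S n) <= r * e n + t n) -> is_lim_seq t 0 -> is_lim_seq e 0.
Proof.
  intros He Hr Hrec Ht; apply is_lim_seq_Reals; apply is_lim_seq_Reals in Ht.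
  intros eps Heps.
  set (eta := eps * (1 - r) / 2).
  assert (Heta : 0 < eta) by (unfold eta; nra).
  destruct (Ht eta Heta) as [N HN].
  assert (Hiter : forall k, e (N + k)%nat <= r ^ k * e N + eta / (1 - r)).
  { induction k as [|k IH].
    - rewrite Nat.add_0_r; simpl.
      assert (0 <= eta / (1 - r)) by (apply Rdiv_le_0_compat; lra); lra.
    - replace (N + S k)%nat with (S (N + k)) by lia.
      specialize (HN (N + k)%nat ltac:(lia)); unfold Rdist in HN.
      rewrite Rminus_0_r in HN; apply Rabs_def2 in HN.
      assert (r * e (N + k)%nat <= r * (r ^ k * e N + eta / (1 - r)))
        by (apply Rmult_le_compat_l; lra).
      assert (eta / (1 - r) = r * (eta / (1 - r)) + eta) by (field; lra).
      specialize (Hrec (N + k)%nat); simpl; lra. }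
  set (y := eps / (2 * (e N + 1))).
  assert (Hy : 0 < y) by (unfold y; pose proof (He N); apply Rdiv_lt_0_compat; lra).
  destruct (pow_lt_1_zero r ltac:(rewrite Rabs_pos_eq; lra) y Hy) as [K HK].
  exists (N + K)%nat; intros n Hn.
  replace n with (N + (n - N))%nat by lia.
  specialize (Hiter (n - N)%nat); specialize (HK (n - N)%nat ltac:(lia)).
  rewrite Rabs_pos_eq in HK by (apply pow_le; lra).
  unfold Rdist; rewrite Rminus_0_r, Rabs_pos_eq by apply He.
  assert (r ^ (n - N) * e N < y * (e N + 1))
    by (pose proof (He N); pose proof (pow_le r (n - N) ltac:(lra)); nra).
  assert (y * (e N + 1) = eps / 2) by (unfold y; field; pose proof (He N); lra).
  assert (eta / (1 - r) = eps / 2) by (unfold eta; field; lra).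
  lra.
Qed.

Lemma excess_step (D P a c d Ln Ln1 Un Un1 : R) :
  0 < D -> 0 < P -> 0 <= d ->
  Un1 <= c + a * D * Ln + d * Rmax 0 (Un - a * Ln) ->
  Rmax 0 (Un1 / (D * P) - a * (Ln1 / (D * P)))
    <= d / D * Rmax 0 (Un / P - a * (Ln / P))
       + Rabs (c / (D * P) + a * (Ln / P - Ln1 / (D * P))).
Proof.
  intros HD HP Hd Hrec.
  set (M := Rmax 0 (Un - a * Ln)).
  assert (HM : M / P = Rmax 0 (Un / P - a * (Ln / P))).
  { unfold M; rewrite Rmax0_div by exact HP; f_equal; field; lra. }
  assert (Hdiv : Un1 / (D * P) <= (c + a * D * Ln + d * M) / (D * P)).
  { apply Rmult_le_compat_r; [left; apply Rinv_0_lt_compat; nra | exact Hrec]. }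
  assert (Hsplit : (c + a * D * Ln + d * M) / (D * P)
                   = c / (D * P) + a * (Ln / P) + d / D * (M / P)) by (field; lra).
  rewrite HM in Hsplit.
  pose proof (Rmax_l 0 (Un / P - a * (Ln / P))).
  pose proof (Rle_abs (c / (D * P) + a * (Ln / P - Ln1 / (D * P)))).
  pose proof (Rabs_pos (c / (D * P) + a * (Ln / P - Ln1 / (D * P)))).
  assert (0 <= d / D * Rmax 0 (Un / P - a * (Ln / P)))
    by (apply Rmult_le_pos; [apply Rdiv_le_0_compat |]; lra).
  apply Rmax_lub; lra.
Qed.

Lemma excess_vanishes (L U : nat -> R) (D a c d G : R) :
  1 < D -> 0 <= d < D -> is_lim_seq (fun n => L n / D ^ n) G ->
  (forall n, U (S n) <= c + a * D * L n + d * Rmax 0 (U n - a * L n)) ->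
  is_lim_seq (fun n => Rmax 0 (U n / D ^ n - a * (L n / D ^ n))) 0.
Proof.
  intros HD Hd HG Hrec.
  set (t := fun n => c / D ^ S n + a * (L n / D ^ n - L (S n) / D ^ S n)).
  apply (perturbed_contraction _ (fun n => Rabs (t n)) (d / D)).
  - intro n; apply Rmax_l.
  - split; [apply Rdiv_le_0_compat; lra |].
    apply Rlt_div_l; lra.
  - intro n; apply excess_step; [lra | apply pow_lt; lra | lra | apply Hrec].
  - replace (Finite 0) with (Rbar_abs (Finite 0)) by (simpl; rewrite Rabs_R0; reflexivity).
    apply is_lim_seq_abs.
    replace (Finite 0) with (Finite (c / D * 0 + a * (G - G))) by (f_equal; ring).
    apply is_lim_seq_plus'.
    + apply (is_lim_seq_ext (fun n => c / D * (/ D) ^ n)).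
      { intro n; simpl; rewrite pow_inv; field; split; [apply pow_nonzero |]; lra. }
      apply is_lim_seq_mult'; [apply is_lim_seq_const | apply inv_pow_to_zero, HD].
    + apply is_lim_seq_mult'; [apply is_lim_seq_const |].
      apply is_lim_seq_minus'; [exact HG |].
      apply (is_lim_seq_incr_1 (fun n => L n / D ^ n)), HG.
Qed.

Lemma logp_max_rpow_split (x y a P : R) :
  0 <= x -> 0 <= y -> 0 <= a -> 0 < P ->
  logp (Rmax (rpow x a) y) / P
    = a * (logp x / P) + Rmax 0 (logp y / P - a * (logp x / P)).
Proof.
  intros Hx Hy Ha HP.
  rewrite logp_Rmax, logp_rpow by (apply rpow_nonneg || assumption).
  assert (Hsplit : forall u v, Rmax u v = u + Rmax 0 (v - u))
    by (intros u v; unfold Rmax; destruct (Rle_dec u v), (Rle_dec 0 (v - u)); lra).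
  rewrite Hsplit, Rdiv_plus_distr, Rmax0_div by exact HP.
  f_equal; [| f_equal]; field; lra.
Qed.

Lemma fst_fiter (p : poly1) (q : poly2) (n : nat) (zw : Cx * Cx) :
  fst (fiter p q n zw) = piter p n (fst zw).
Proof. induction n as [|n IH]; [reflexivity |]; simpl; rewrite <- IH; reflexivity. Qed.

Theorem corollary4p2 (delta d gamma : nat) (p : poly1) (q : poly2) :
  (2 <= delta)%nat -> monic_deg p delta ->
  (2 <= d)%nat -> length q = S d -> monic_deg (nth d q []) gamma ->
  (d < delta)%nat ->
  forall z w : Cx,
    exists Gp : R,
      Un_cv (fun n => logp (Cmod (piter p n z)) / INR delta ^ n) Gp /\
      Un_cv (fun n =>
               logp (Rmax (rpow (Cmod (fst (fiter p q n (z, w)))) (alpha delta q))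
                          (Cmod (snd (fiter p q n (z, w))))) / INR delta ^ n)
            (alpha delta q * Gp).
Proof.
  intros Hdelta [Hlenp _] _ Hlenq _ Hdd z w.
  set (D := INR delta); set (a := alpha delta q).
  set (L := fun n => logp (Cmod (piter p n z))).
  set (U := fun n => logp (Cmod (snd (fiter p q n (z, w))))).
  assert (HD : 1 < D) by (apply (lt_INR 1); lia).
  assert (HdD : 0 <= INR d < D) by (split; [apply pos_INR | apply lt_INR, Hdd]).
  destruct (green_limit_exists L D (ln (norm1 p + 1))) as [G HG]; try assumption.
  { rewrite <- ln_1; apply ln_le; pose proof (norm1_nonneg p); lra. }
  { intro n; apply logp_nonneg. }
  { intro n; apply p_growth, Hlenp. }
  exists G; split; [apply is_lim_seq_Reals, HG |].
  assert (Hexcess := excess_vanishes L U D a (ln (norm2 q + 1)) (INR d) G HD HdD HG).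
  apply is_lim_seq_Reals.
  apply (is_lim_seq_ext (fun n => a * (L n / D ^ n) + Rmax 0 (U n / D ^ n - a * (L n / D ^ n)))).
  { intro n; rewrite fst_fiter; symmetry.
    apply logp_max_rpow_split; try apply Cmod_nonneg; [apply alpha_nonneg | apply pow_lt; lra]. }
  replace (Finite (a * G)) with (Finite (a * G + 0)) by (f_equal; ring).
  apply is_lim_seq_plus'; [apply is_lim_seq_mult'; [apply is_lim_seq_const | exact HG] |].
  apply Hexcess; intro n; unfold U, L.
  replace (piter p n z) with (fst (fiter p q n (z, w))) by apply fst_fiter.
  apply q_growth; assumption.
Qed.
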